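(* Let $\alpha,\beta,\gamma\in\mathbb{Z}[i]$ satisfy $\alpha^2+i\beta^2+\gamma^2=0$, $\alpha\beta\gamma\neq0$ and $\gcd(\alpha,\beta,\gamma)\in U$. Then $\alpha\beta\gamma\equiv0\pmod{1+i}$.
   Context: $\mathbb{Z}[i]$ is the ring of Gaussian integers, $U=\{1,-1,i,-i\}$ its unit group; $\gcd(\alpha,\beta,\gamma)\in U$ means no common non-unit divisor. *)

(* Gaussian integers Z[i] modeled concretely as pairs of
   integers (a, b) standing for a + b i, with the ring operations below. *)
From mathcomp Require Import all_boot all_order all_algebra.
Set Implicit Arguments. Unset Strict Implicit. Unset Printing Implicit Defensive.
Import GRing.Theory Num.Theory.
Local Open Scope ring_scope.

Record gint := GI { gre : int; gim : int }.

Definition gzero : gint := GI 0 0.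
Definition gone : gint := GI 1 0.
Definition gi : gint := GI 0 1.
Definition gadd (x y : gint) : gint := GI (gre x + gre y) (gim x + gim y).
Definition gmul (x y : gint) : gint :=
  GI (gre x * gre y - gim x * gim y) (gre x * gim y + gim x * gre y).

Definition gdvd (d x : gint) : Prop := exists q : gint, x = gmul d q.

Definition gunit (u : gint) : Prop :=
  u = GI 1 0 \/ u = GI (-1) 0 \/ u = GI 0 1 \/ u = GI 0 (-1).

Definition gcd3_unit (a b c : gint) : Prop :=
  forall d : gint, gdvd d a -> gdvd d b -> gdvd d c -> gunit d.

From mathcomp Require Import all_boot all_order all_algebra.
From mathcomp Require Import ring.
Import GRing.Theory Num.Theory.

Local Open Scope ring_scope.

Lemma gmulA (x y z : gint) : gmul x (gmul y z) = gmul (gmul x y) z.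
Proof. by case: x y z => [a b] [c d] [e f]; rewrite /gmul /=; congr GI; ring. Qed.

Lemma gmulC (x y : gint) : gmul x y = gmul y x.
Proof. by case: x y => [a b] [c d]; rewrite /gmul /=; congr GI; ring. Qed.

Lemma gdvd_mulr (d x y : gint) : gdvd d x -> gdvd d (gmul x y).
Proof. by case=> q ->; exists (gmul q y); rewrite gmulA. Qed.

Lemma gdvd_mull (d x y : gint) : gdvd d y -> gdvd d (gmul x y).
Proof. by rewrite gmulC; apply: gdvd_mulr. Qed.

Lemma gdvd_1i (x : gint) : (2 %| gre x + gim x)%Z -> gdvd (GI 1 1) x.
Proof.
case: x => r m /= /dvdzP[k Ek].
have -> : r = k * 2 - m by rewrite -Ek; ring.
by exists (GI k (m - k)); rewrite /gmul /=; congr GI; ring.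
Qed.

Lemma dvdz_prime_sqr (p : nat) (x : int) :
  prime p -> (p %| x * x)%Z -> (p %| x)%Z.
Proof. by move=> p_pr; rewrite !dvdzE abszM Euclid_dvdM // orbb. Qed.

Lemma dvdz2_subsqr (m n : int) : (2 %| m * m - n * n)%Z -> (2 %| m + n)%Z.
Proof.
move=> even_diff; apply: dvdz_prime_sqr => //.
have -> : (m + n) * (m + n) = (m * m - n * n) + n * (m + n) * 2 by ring.
by rewrite rpredD // dvdz_mull.
Qed.

Theorem lemma4p5 (alpha beta gamma : gint) :
  gadd (gadd (gmul alpha alpha) (gmul gi (gmul beta beta))) (gmul gamma gamma)
    = gzero ->
  gmul (gmul alpha beta) gamma <> gzero ->
  gcd3_unit alpha beta gamma ->
  gdvd (GI 1%:Z 1%:Z) (gmul (gmul alpha beta) gamma).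
Proof.
move=> /(congr1 gim) eq_im _ _.
have beta_1i : gdvd (GI 1 1) beta.
  apply/gdvd_1i/dvdz2_subsqr.
  case: alpha beta gamma eq_im => [a1 a2] [b1 b2] [c1 c2] /= eq_im.
  have -> : b1 * b1 - b2 * b2 = - ((a1 * a2 + c1 * c2) * 2).
    by apply/eqP; rewrite -subr_eq0 -eq_im; apply/eqP; ring.
  by rewrite rpredN dvdz_mull.
exact/gdvd_mulr/gdvd_mull.
Qed.
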